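(* Let $M_\lambda$ ($\lambda>0$) and $M$ be as in the context. Then $M'_{\lambda}(x)\to M'(x)$ as $\lambda\to0^+$, uniformly for $x\in(0,\infty)$, with the points $x=1,2$ excluded.
   Context: For $\lambda>0$, $M_\lambda:[0,\infty)\to\mathbb R$ is defined by $M_\lambda(x)=0$ for $0\le x\le1$ and, for all $x>0$, $M_{\lambda}(x+1)=\int_0^x\frac{\lambda e^{-\lambda t}}{1-e^{-\lambda x}}\bigl(M_{\lambda}(t)+M_{\lambda}(x-t)\bigr)\,dt+1$. This is the expected number of intervals at saturation in the exponential parking problem. $M:[0,\infty)\to\mathbb R$ is defined by $M(x)=0$ for $0\le x\le1$ and, for $x>0$, $M(x+1)=\frac2x\int_0^xM(t)\,dt+1$. This is Rényi's uniform parking expectation. Following the paper's convention, $M'_\lambda(x)=M'(x)=0$ on $(0,1)\cup(1,2)$; the derivatives do not exist at $x=1,2$. *)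

From Stdlib Require Import Reals.
From Coquelicot Require Import Coquelicot.
Open Scope R_scope.

Definition is_M_lambda (lam : R) (f : R -> R) : Prop :=
  (forall x, 0 <= x <= 1 -> f x = 0) /\
  (forall x, 0 < x ->
     f (x + 1) =
       RInt (fun t => lam * exp (- (lam * t)) / (1 - exp (- (lam * x)))
                        * (f t + f (x - t))) 0 x + 1).

Definition is_M_renyi (f : R -> R) : Prop :=
  (forall x, 0 <= x <= 1 -> f x = 0) /\
  (forall x, 0 < x -> f (x + 1) = 2 / x * RInt f 0 x + 1).

From Stdlib Require Import Reals Lra ZArith.
From Coquelicot Require Import Coquelicot.
Open Scope R_scope.

(* For [0 < x < 2] both derivatives vanish. Both [M_lambda] and [M] solve a delay equation
   [f (x + 1) = 1 + int_0^x k(x, s) f(s) ds] whose kernel is a sum of two separable terms. As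
   [lam -> 0], the exponential kernel and its [x]-derivative converge to Renyi's [2/x] and
   [-2/x^2] uniformly on bounded ranges, so a Gronwall estimate gives uniform convergence of
   the derivatives on every bounded range. Far out, a maximum principle takes over: for
   [Psi = x^2/2] (Renyi) and [Psi = (cosh (lam x) - 1)/lam] (exponential), the function
   [Psi(t) (f'(t + 1) - c)] has derivative [Psi'(t) (f'(t) - c)] with [Psi' >= 0], so a bound
   [|f' - c| <= E] on one unit window propagates to all later points. Since [M'] oscillates
   by [O(1/T)] on [[T, T + 1]], the choice [c = M'(T)] controls both tails at once. *)

Lemma INR_unbounded (z : R) : exists n : nat, z < INR n.
Proof.
  destruct (Rlt_or_le z 0) as [Hz | Hz].
  - exists 0%nat; simpl; lra.
  - destruct (archimed z) as [Hup _]. exists (Z.to_nat (up z)).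
    rewrite INR_IZR_INZ, Z2Nat.id; [lra |]. apply le_IZR; lra.
Qed.

Lemma locally_open_interval (P : R -> Prop) (x a b : R) :
  a < x < b -> (forall y, a < y < b -> P y) -> locally x P.
Proof.
  intros [Hax Hxb] HP. apply (locally_interval P x a b Hax Hxb).
  intros y Hay Hyb. apply HP; split; assumption.
Qed.

Lemma is_RInt_vanishing (h : R -> R) (X : R) :
  0 <= X -> (forall s, 0 < s < X -> h s = 0) -> is_RInt h 0 X 0.
Proof.
  intros HX Hh. apply (is_RInt_ext (V := R_NormedModule) (fun _ => 0)).
  - intros s Hs. rewrite Rmin_left, Rmax_right in Hs by lra. symmetry; apply Hh; lra.
  - replace 0 with (scal (X - 0) 0) at 2 by (unfold scal; simpl; unfold mult; simpl; ring).
    apply (is_RInt_const (V := R_NormedModule)).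
Qed.

Lemma is_RInt_reflect (h : R -> R) (a b l : R) :
  is_RInt h a b l -> is_RInt (fun t => h (a + b - t)) a b l.
Proof.
  intros Hh.
  assert (Hlin := is_RInt_comp_lin (V := R_NormedModule) h (-1) (a + b) a b (opp l)).
  replace (-1 * a + (a + b)) with b in Hlin by ring.
  replace (-1 * b + (a + b)) with a in Hlin by ring.
  specialize (Hlin (is_RInt_swap _ _ _ _ Hh)).
  apply (is_RInt_ext (V := R_NormedModule)) with (fun t => opp (scal (-1) (h (-1 * t + (a + b))))).
  - intros t _. unfold opp, scal; simpl; unfold mult; simpl.
    replace (-1 * t + (a + b)) with (a + b - t) by ring. ring.
  - rewrite <- (opp_opp l). apply (is_RInt_opp (V := R_NormedModule)), Hlin.
Qed.

Lemma nondecreasing_of_derive_nonneg (h dh : R -> R) (a b : R) :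
  a <= b ->
  (forall t, a <= t <= b -> is_derive h t (dh t)) ->
  (forall t, a <= t <= b -> 0 <= dh t) -> h a <= h b.
Proof.
  intros Hab Hd Hpos.
  destruct (MVT_gen h a b dh) as [c [Hc Heq]].
  - intros t Ht. rewrite Rmin_left, Rmax_right in Ht by lra. apply Hd; lra.
  - intros t Ht. rewrite Rmin_left, Rmax_right in Ht by lra.
    apply continuity_pt_filterlim, (ex_derive_continuous (K := R_AbsRing) (V := R_NormedModule)).
    exists (dh t). apply Hd; lra.
  - rewrite Rmin_left, Rmax_right in Hc by lra. specialize (Hpos c Hc). nra.
Qed.

Lemma abs_le_of_derive_dominated (G g P p : R -> R) (a b : R) :
  a <= b ->
  (forall t, a <= t <= b -> is_derive G t (g t)) ->
  (forall t, a <= t <= b -> is_derive P t (p t)) ->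
  (forall t, a <= t <= b -> Rabs (g t) <= p t) ->
  Rabs (G a) <= P a -> Rabs (G b) <= P b.
Proof.
  intros Hab HG HP Hgp Ha. apply Rabs_le_between in Ha.
  assert (Hdom : forall t, a <= t <= b -> - p t <= g t <= p t)
    by (intros t Ht; apply Rabs_le_between, Hgp, Ht).
  assert (Hlo : P a + G a <= P b + G b).
  { apply (nondecreasing_of_derive_nonneg (fun t => P t + G t) (fun t => p t + g t)); auto.
    - intros t Ht. apply (is_derive_plus (K := R_AbsRing) (V := R_NormedModule)); auto.
    - intros t Ht. specialize (Hdom t Ht). lra. }
  assert (Hhi : P a - G a <= P b - G b).
  { apply (nondecreasing_of_derive_nonneg (fun t => P t - G t) (fun t => p t - g t)); auto.
    - intros t Ht. apply (is_derive_minus (K := R_AbsRing) (V := R_NormedModule)); auto.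
    - intros t Ht. specialize (Hdom t Ht). lra. }
  apply Rabs_le. lra.
Qed.

Record sep_kernel := SepKernel {
  coef1 : R -> R; coef2 : R -> R; dcoef1 : R -> R; dcoef2 : R -> R;
  weight1 : R -> R; weight2 : R -> R;
  coef1_derive : forall x, 0 < x -> is_derive coef1 x (dcoef1 x);
  coef2_derive : forall x, 0 < x -> is_derive coef2 x (dcoef2 x);
  weight1_continuous : forall s, continuous weight1 s;
  weight2_continuous : forall s, continuous weight2 s }.

Definition kern (K : sep_kernel) (x s : R) : R :=
  coef1 K x * weight1 K s + coef2 K x * weight2 K s.

Definition dkern (K : sep_kernel) (x s : R) : R :=
  dcoef1 K x * weight1 K s + dcoef2 K x * weight2 K s.

Definition delay_rhs (K : sep_kernel) (f : R -> R) (x : R) : R :=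
  1 + coef1 K x * RInt (fun s => weight1 K s * f s) 0 x
    + coef2 K x * RInt (fun s => weight2 K s * f s) 0 x.

(* [RInt] returns a junk value on non-integrable functions, so the equation is
   only required once the integrals make sense; [solution_shift] removes the
   premise. *)
Definition delay_solution (K : sep_kernel) (f : R -> R) : Prop :=
  (forall x, 0 <= x <= 1 -> f x = 0) /\
  (forall x, 0 < x ->
     (forall g, (forall s, continuous g s) -> ex_RInt (fun s => g s * f s) 0 x) ->
     f (x + 1) = delay_rhs K f x).

Lemma kern_continuous (K : sep_kernel) (x s : R) : continuous (kern K x) s.
Proof.
  unfold kern. apply (continuous_plus (V := R_NormedModule));
    apply (continuous_mult (K := R_AbsRing));
    auto using continuous_const, weight1_continuous, weight2_continuous.
Qed.

Lemma dkern_continuous (K : sep_kernel) (x s : R) : continuous (dkern K x) s.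
Proof.
  unfold dkern. apply (continuous_plus (V := R_NormedModule));
    apply (continuous_mult (K := R_AbsRing));
    auto using continuous_const, weight1_continuous, weight2_continuous.
Qed.

Section DelaySolution.
Variables (K : sep_kernel) (f : R -> R).
Hypothesis Hf : delay_solution K f.

Lemma solution_eq0 x : 0 <= x <= 1 -> f x = 0.
Proof. apply Hf. Qed.

Lemma is_RInt_weighted_unit (g : R -> R) (X : R) :
  0 <= X <= 1 -> is_RInt (fun s => g s * f s) 0 X 0.
Proof.
  intros HX. apply is_RInt_vanishing; [lra |].
  intros s Hs. rewrite solution_eq0 by lra. ring.
Qed.

Lemma solution_eq1 x : 1 < x <= 2 -> f x = 1.
Proof.
  intros Hx. replace x with ((x - 1) + 1) by ring.
  destruct Hf as [_ Hshift]. rewrite Hshift by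
    (try lra; intros g _; eexists; apply is_RInt_weighted_unit; lra).
  unfold delay_rhs.
  rewrite !(is_RInt_unique _ _ _ _ (is_RInt_weighted_unit _ (x - 1) ltac:(lra))). ring.
Qed.

Lemma ex_RInt_weighted_of_continuous (g : R -> R) (X : R) :
  (forall s, continuous g s) -> 0 <= X ->
  (forall z, 2 <= z <= X -> continuous f z) -> ex_RInt (fun s => g s * f s) 0 X.
Proof.
  intros Hg HX Hc.
  assert (Hupto2 : forall Y, 1 <= Y <= 2 -> ex_RInt (fun s => g s * f s) 0 Y).
  { intros Y HY. apply (ex_RInt_Chasles (V := R_NormedModule)) with 1.
    - eexists; apply is_RInt_weighted_unit; lra.
    - apply (ex_RInt_ext (V := R_NormedModule)) with g.
      + intros s Hs. rewrite Rmin_left, Rmax_right in Hs by lra.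
        now rewrite solution_eq1, Rmult_1_r by lra.
      + apply (ex_RInt_continuous (V := R_CompleteNormedModule)). auto. }
  destruct (Rle_or_lt X 1) as [H1 | H1]; [eexists; apply is_RInt_weighted_unit; lra |].
  destruct (Rle_or_lt X 2) as [H2 | H2]; [apply Hupto2; lra |].
  apply (ex_RInt_Chasles (V := R_NormedModule)) with 2; [apply Hupto2; lra |].
  apply (ex_RInt_continuous (V := R_CompleteNormedModule)).
  intros z Hz. rewrite Rmin_left, Rmax_right in Hz by lra.
  apply (continuous_mult (K := R_AbsRing)); auto.
Qed.

Lemma continuous_delay_rhs x :
  0 < x ->
  (forall g, (forall s, continuous g s) -> locally x (fun y => ex_RInt (fun s => g s * f s) 0 y)) ->
  continuous (delay_rhs K f) x.
Proof.
  intros Hx Hint.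
  assert (HI : forall g, (forall s, continuous g s) ->
            continuous (fun y => RInt (fun s => g s * f s) 0 y) x).
  { intros g Hg.
    apply (continuous_RInt_1 (V := R_NormedModule) (fun s => g s * f s) 0 x).
    apply (filter_imp (fun y => ex_RInt (fun s => g s * f s) 0 y)); [| apply Hint, Hg].
    intros y Hy. apply (RInt_correct (V := R_CompleteNormedModule)), Hy. }
  assert (Hc1 : continuous (coef1 K) x).
  { apply (ex_derive_continuous (K := R_AbsRing) (V := R_NormedModule)).
    eexists; apply coef1_derive, Hx. }
  assert (Hc2 : continuous (coef2 K) x).
  { apply (ex_derive_continuous (K := R_AbsRing) (V := R_NormedModule)).
    eexists; apply coef2_derive, Hx. }
  unfold delay_rhs.
  apply (continuous_plus (V := R_NormedModule)); [apply (continuous_plus (V := R_NormedModule)) |].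
  - apply continuous_const.
  - apply (continuous_mult (K := R_AbsRing)); auto using weight1_continuous.
  - apply (continuous_mult (K := R_AbsRing)); auto using weight2_continuous.
Qed.

Lemma solution_continuous_below (n : nat) z : 1 < z < INR n + 2 -> continuous f z.
Proof.
  revert z. induction n as [| n IH]; intros z Hz.
  - simpl in Hz. apply (continuous_ext_loc (U := R_UniformSpace) _ (fun _ => 1)).
    + apply (locally_open_interval _ z 1 2); [lra |].
      intros y Hy. rewrite solution_eq1 by lra. reflexivity.
    + apply continuous_const.
  - rewrite S_INR in Hz.
    assert (Hint : forall g, (forall s, continuous g s) -> forall y, 0 <= y < INR n + 2 ->
                   ex_RInt (fun s => g s * f s) 0 y).
    { intros g Hg y Hy. apply ex_RInt_weighted_of_continuous; auto; [lra |].
      intros w Hw. apply IH. lra. }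
    apply (continuous_ext_loc (U := R_UniformSpace) _ (fun w => delay_rhs K f (w - 1))).
    + apply (locally_open_interval _ z 1 (INR n + 3)); [lra |].
      intros y Hy. replace y with ((y - 1) + 1) at 2 by ring.
      symmetry. apply Hf; [lra |]. intros g Hg. apply Hint; auto; lra.
    + apply (continuous_comp (fun w => w - 1) (delay_rhs K f)).
      * apply (continuous_minus (V := R_NormedModule));
          [apply continuous_id | apply continuous_const].
      * apply continuous_delay_rhs; [lra |]. intros g Hg.
        apply (locally_open_interval _ (z - 1) 0 (INR n + 2)); [lra |].
        intros y Hy. apply Hint; auto; lra.
Qed.

Lemma solution_continuous z : 1 < z -> continuous f z.
Proof.
  intros Hz. destruct (INR_unbounded z) as [n Hn].
  apply (solution_continuous_below n). lra.
Qed.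

Lemma ex_RInt_weighted (g : R -> R) (X : R) :
  (forall s, continuous g s) -> 0 <= X -> ex_RInt (fun s => g s * f s) 0 X.
Proof.
  intros Hg HX. apply ex_RInt_weighted_of_continuous; auto.
  intros z Hz. apply solution_continuous. lra.
Qed.

Lemma solution_shift x : 0 < x -> f (x + 1) = delay_rhs K f x.
Proof.
  intros Hx. apply Hf; auto. intros g Hg. apply ex_RInt_weighted; auto; lra.
Qed.

Lemma is_derive_RInt_weighted (g : R -> R) x :
  (forall s, continuous g s) -> 1 < x ->
  is_derive (fun y => RInt (fun s => g s * f s) 0 y) x (g x * f x).
Proof.
  intros Hg Hx. apply (is_derive_RInt (V := R_NormedModule) (fun s => g s * f s) _ 0 x).
  - apply (locally_open_interval _ x 0 (x + 1)); [lra |].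
    intros y Hy. apply (RInt_correct (V := R_CompleteNormedModule)).
    apply ex_RInt_weighted; auto; lra.
  - apply (continuous_mult (K := R_AbsRing)); auto. apply solution_continuous, Hx.
Qed.

Lemma RInt_weighted_split (c1 c2 x : R) : 0 <= x ->
  RInt (fun s => (c1 * weight1 K s + c2 * weight2 K s) * f s) 0 x =
  c1 * RInt (fun s => weight1 K s * f s) 0 x + c2 * RInt (fun s => weight2 K s * f s) 0 x.
Proof.
  intros Hx.
  assert (E1 := ex_RInt_weighted _ x (weight1_continuous K) Hx).
  assert (E2 := ex_RInt_weighted _ x (weight2_continuous K) Hx).
  rewrite (RInt_ext _ (fun s => plus (scal c1 (weight1 K s * f s)) (scal c2 (weight2 K s * f s)))).
  - rewrite (RInt_plus (V := R_CompleteNormedModule)),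
      !(RInt_scal (V := R_CompleteNormedModule)) by
      first [ exact E1 | exact E2 | apply (ex_RInt_scal (V := R_NormedModule)); assumption ].
    reflexivity.
  - intros s _. unfold plus, scal; simpl; unfold mult; simpl. ring.
Qed.

Lemma solution_shift_kern x : 0 < x -> f (x + 1) = 1 + RInt (fun s => kern K x s * f s) 0 x.
Proof.
  intros Hx. rewrite solution_shift by exact Hx. unfold kern.
  rewrite RInt_weighted_split by lra. unfold delay_rhs. ring.
Qed.

Lemma is_derive_delay_rhs x : 1 < x ->
  is_derive (delay_rhs K f) x (kern K x x * f x + RInt (fun s => dkern K x s * f s) 0 x).
Proof.
  intros Hx. unfold dkern. rewrite RInt_weighted_split by lra.
  set (I1 := RInt (fun s => weight1 K s * f s) 0 x).
  set (I2 := RInt (fun s => weight2 K s * f s) 0 x).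
  replace (kern K x x * f x + (dcoef1 K x * I1 + dcoef2 K x * I2)) with
    (0 + (dcoef1 K x * I1 + coef1 K x * (weight1 K x * f x))
       + (dcoef2 K x * I2 + coef2 K x * (weight2 K x * f x))) by (unfold kern; ring).
  unfold delay_rhs.
  apply (is_derive_plus (K := R_AbsRing) (V := R_NormedModule));
    [apply (is_derive_plus (K := R_AbsRing) (V := R_NormedModule)) |].
  - apply (is_derive_const (K := R_AbsRing) (V := R_NormedModule)).
  - apply (is_derive_mult (K := R_AbsRing)); [apply coef1_derive; lra | | intros; apply Rmult_comm].
    apply is_derive_RInt_weighted; auto using weight1_continuous.
  - apply (is_derive_mult (K := R_AbsRing)); [apply coef2_derive; lra | | intros; apply Rmult_comm].
    apply is_derive_RInt_weighted; auto using weight2_continuous.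
Qed.

Lemma is_derive_solution_shift x : 1 < x ->
  is_derive f (x + 1) (kern K x x * f x + RInt (fun s => dkern K x s * f s) 0 x).
Proof.
  intros Hx. apply (is_derive_ext_loc (fun w => delay_rhs K f (w - 1))).
  - apply (locally_open_interval _ (x + 1) 1 (x + 2)); [lra |].
    intros y Hy. replace y with ((y - 1) + 1) at 2 by ring.
    symmetry. apply solution_shift. lra.
  - set (d := kern K x x * f x + _).
    replace d with (scal 1 d) by apply (scal_one (K := R_AbsRing) (V := R_NormedModule)).
    apply (is_derive_comp (K := R_AbsRing) (V := R_NormedModule) (delay_rhs K f) (fun w => w - 1)).
    + replace (x + 1 - 1) with x by ring. apply is_derive_delay_rhs, Hx.
    + auto_derive; auto.
Qed.

Lemma Derive_solution_shift x : 1 < x ->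
  Derive f (x + 1) = kern K x x * f x + RInt (fun s => dkern K x s * f s) 0 x.
Proof. intros Hx. apply is_derive_unique, is_derive_solution_shift, Hx. Qed.

Lemma ex_derive_solution x : 2 < x -> ex_derive f x.
Proof.
  intros Hx. eexists. replace x with ((x - 1) + 1) at 1 by ring.
  apply is_derive_solution_shift. lra.
Qed.

Lemma Derive_solution_flat y : 0 < y < 1 \/ 1 < y < 2 -> Derive f y = 0.
Proof.
  intros Hy. apply is_derive_unique. destruct Hy as [Hy | Hy].
  - apply (is_derive_ext_loc (fun _ => 0)).
    + apply (locally_open_interval _ y 0 1); [lra |].
      intros w Hw. rewrite solution_eq0 by lra. reflexivity.
    + apply (is_derive_const (K := R_AbsRing) (V := R_NormedModule)).
  - apply (is_derive_ext_loc (fun _ => 1)).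
    + apply (locally_open_interval _ y 1 2); [lra |].
      intros w Hw. rewrite solution_eq1 by lra. reflexivity.
    + apply (is_derive_const (K := R_AbsRing) (V := R_NormedModule)).
Qed.

End DelaySolution.

Section Balance.
Variables (K : sep_kernel) (f Psi Psi1 Psi2 : R -> R).
Hypothesis Hf : delay_solution K f.
Hypothesis HPsi : forall t, is_derive Psi t (Psi1 t).
Hypothesis HPsi1 : forall t, is_derive Psi1 t (Psi2 t).
Hypothesis HPsi2 : forall t, continuous Psi2 t.
Hypothesis Psi_kern : forall t, 1 < t -> Psi t * kern K t t = Psi1 t.
Hypothesis Psi_dkern : forall t s, 1 < t -> Psi t * dkern K t s = - Psi2 s.

Lemma Derive_solution_balance t : 1 < t ->
  Psi t * Derive f (t + 1) = Psi1 t * f t - RInt (fun s => Psi2 s * f s) 0 t.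
Proof.
  intros Ht. rewrite (Derive_solution_shift K f Hf t Ht), Rmult_plus_distr_l, <- Rmult_assoc, Psi_kern by exact Ht.
  assert (Hint : RInt (fun s => Psi2 s * f s) 0 t
                 = - (Psi t * RInt (fun s => dkern K t s * f s) 0 t)).
  { apply (is_RInt_unique (V := R_CompleteNormedModule)).
    apply (is_RInt_ext (V := R_NormedModule) (fun s => opp (scal (Psi t) (dkern K t s * f s)))).
    - intros s _. unfold opp, scal; simpl; unfold mult; simpl.
      rewrite <- Rmult_assoc, Psi_dkern by exact Ht. ring.
    - apply (is_RInt_opp (V := R_NormedModule)), (is_RInt_scal (V := R_NormedModule)).
      apply (RInt_correct (V := R_CompleteNormedModule)).
      apply (ex_RInt_weighted K f Hf); [apply dkern_continuous | lra]. }
  rewrite Hint. ring.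
Qed.

Lemma is_derive_balance c t : 2 < t ->
  is_derive (fun u => Psi u * (Derive f (u + 1) - c)) t (Psi1 t * (Derive f t - c)).
Proof.
  intros Ht.
  apply (is_derive_ext_loc
           (fun u => Psi1 u * f u - RInt (fun s => Psi2 s * f s) 0 u - c * Psi u)).
  - apply (locally_open_interval _ t 1 (t + 1)); [lra |].
    intros u Hu. rewrite Rmult_minus_distr_l, Derive_solution_balance by lra; simpl; ring.
  - replace (Psi1 t * (Derive f t - c)) with
      ((Psi2 t * f t + Psi1 t * Derive f t) - Psi2 t * f t - c * Psi1 t) by ring.
    apply (is_derive_minus (K := R_AbsRing) (V := R_NormedModule));
      [apply (is_derive_minus (K := R_AbsRing) (V := R_NormedModule)) |].
    + apply (is_derive_mult (K := R_AbsRing)); [apply HPsi1 | | intros; apply Rmult_comm].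
      apply Derive_correct, (ex_derive_solution K f Hf), Ht.
    + apply (is_derive_RInt_weighted K f Hf); auto. lra.
    + apply is_derive_scal, HPsi.
Qed.

Lemma balance_deviation_le a x c E : 2 < a <= x ->
  (forall s, a <= s <= x -> 0 <= Psi1 s /\ Rabs (Derive f s - c) <= E) ->
  Rabs (Psi x * (Derive f (x + 1) - c)) <=
    Rabs (Psi a * (Derive f (a + 1) - c)) + E * (Psi x - Psi a).
Proof.
  intros Hax Hs.
  set (G0 := Rabs (Psi a * (Derive f (a + 1) - c))).
  replace (G0 + E * (Psi x - Psi a)) with (E * Psi x + (G0 - E * Psi a)) by ring.
  apply (abs_le_of_derive_dominated (fun u => Psi u * (Derive f (u + 1) - c))
           (fun s => Psi1 s * (Derive f s - c))
           (fun u => E * Psi u + (G0 - E * Psi a)) (fun s => E * Psi1 s + 0) a x);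
    [lra | | | | unfold G0; lra].
  - intros t Ht. apply is_derive_balance. lra.
  - intros t Ht. apply (is_derive_plus (K := R_AbsRing) (V := R_NormedModule)).
    + apply is_derive_scal, HPsi.
    + apply (is_derive_const (K := R_AbsRing) (V := R_NormedModule)).
  - intros t Ht. destruct (Hs t Ht) as [Hpos Hdev].
    rewrite Rabs_mult, (Rabs_pos_eq (Psi1 t)) by exact Hpos.
    rewrite Rplus_0_r, (Rmult_comm E). apply Rmult_le_compat_l; assumption.
Qed.

Lemma Derive_deviation_persists T c E : 2 < T ->
  (forall t, T <= t -> 0 < Psi t /\ 0 <= Psi1 t) ->
  (forall y, T <= y <= T + 1 -> Rabs (Derive f y - c) <= E) ->
  forall y, T <= y -> Rabs (Derive f y - c) <= E.
Proof.
  intros HT Hpos Hinit.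
  assert (Hwindow : forall n : nat, forall y, T <= y <= T + INR n + 1 -> Rabs (Derive f y - c) <= E).
  { induction n as [| n IH]; intros y Hy.
    - apply Hinit. simpl in Hy. lra.
    - rewrite S_INR in Hy. pose proof (pos_INR n) as Hn.
      destruct (Rle_or_lt y (T + INR n + 1)) as [Hle | Hgt]; [apply IH; lra |].
      replace y with ((y - 1) + 1) by ring. set (x := y - 1).
      destruct (Hpos x ltac:(unfold x; lra)) as [Hpx _].
      assert (Hbal := balance_deviation_le T x c E ltac:(unfold x; lra)).
      assert (HT1 : Rabs (Psi T * (Derive f (T + 1) - c)) <= E * Psi T).
      { destruct (Hpos T (Rle_refl T)) as [HpT _].
        rewrite Rabs_mult, (Rabs_pos_eq (Psi T)), (Rmult_comm E) by lra.
        apply Rmult_le_compat_l; [lra | apply Hinit; lra]. }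
      assert (Habs : Psi x * Rabs (Derive f (x + 1) - c) <= Psi x * E).
      { rewrite <- (Rabs_pos_eq (Psi x)) at 1 by lra. rewrite <- Rabs_mult.
        eapply Rle_trans; [apply Hbal | lra].
        intros s Hs. split; [apply Hpos; lra | apply IH; unfold x in Hs; lra]. }
      apply Rmult_le_reg_l in Habs; assumption. }
  intros y Hy. destruct (INR_unbounded (y - T)) as [n Hn].
  apply (Hwindow n). lra.
Qed.

End Balance.

Lemma abs_mul_sub_mul_le (a b c d B eta D A : R) :
  Rabs a <= B -> Rabs (a - b) <= eta -> Rabs (c - d) <= D -> Rabs d <= A ->
  Rabs (a * c - b * d) <= B * D + eta * A.
Proof.
  intros Ha Hab Hcd Hd.
  replace (a * c - b * d) with (a * (c - d) + (a - b) * d) by ring.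
  eapply Rle_trans; [apply Rabs_triang |]. rewrite !Rabs_mult.
  apply Rplus_le_compat; apply Rmult_le_compat; auto using Rabs_pos.
Qed.

Lemma abs_RInt_sub_le (h1 h2 : R -> R) (x m : R) :
  0 <= x -> ex_RInt h1 0 x -> ex_RInt h2 0 x ->
  (forall t, 0 <= t <= x -> Rabs (h1 t - h2 t) <= m) ->
  Rabs (RInt h1 0 x - RInt h2 0 x) <= x * m.
Proof.
  intros Hx E1 E2 Hm.
  rewrite <- (RInt_minus (V := R_CompleteNormedModule)) by assumption.
  replace x with (x - 0) at 2 by ring.
  apply abs_RInt_le_const; auto.
  apply (ex_RInt_minus (V := R_NormedModule)); assumption.
Qed.

Fixpoint gronwall_const (B A : R) (n : nat) : R :=
  match n with
  | O => 0
  | S m => (INR m + 1) * (B * gronwall_const B A m + A)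
  end.

Lemma gronwall_const_nonneg B A n : 0 <= B -> 0 <= A -> 0 <= gronwall_const B A n.
Proof.
  intros HB HA. induction n as [| n IH]; simpl; [lra |].
  apply Rmult_le_pos; [pose proof (pos_INR n); lra | nra].
Qed.

Section Comparison.
Variables (K K0 : sep_kernel) (f f0 : R -> R) (N B eta A : R).
Hypothesis Hf : delay_solution K f.
Hypothesis Hf0 : delay_solution K0 f0.
Hypothesis Hkern : forall x s, 1 <= x <= N -> 0 <= s <= x ->
  Rabs (kern K x s) <= B /\ Rabs (kern K x s - kern K0 x s) <= eta.
Hypothesis Hdkern : forall x s, 1 <= x <= N -> 0 <= s <= x ->
  Rabs (dkern K x s) <= B /\ Rabs (dkern K x s - dkern K0 x s) <= eta.
Hypothesis Hf0_bound : forall s, 0 <= s <= N -> Rabs (f0 s) <= A.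
Hypothesis HB : 0 <= B.
Hypothesis Heta : 0 <= eta.
Hypothesis HA : 0 <= A.

Lemma solution_sub_le (n : nat) : INR n <= N ->
  forall y, 0 <= y <= INR n + 1 -> Rabs (f y - f0 y) <= eta * gronwall_const B A n.
Proof.
  induction n as [| n IH]; intros HN y Hy.
  - simpl in Hy. rewrite (solution_eq0 K f Hf), (solution_eq0 K0 f0 Hf0) by lra.
    rewrite Rminus_0_r, Rabs_R0. simpl. lra.
  - rewrite S_INR in HN, Hy. pose proof (pos_INR n) as Hn.
    pose proof (gronwall_const_nonneg B A n HB HA) as HC.
    assert (HCS : 0 <= eta * gronwall_const B A (S n))
      by (apply Rmult_le_pos, gronwall_const_nonneg; assumption).
    destruct (Rle_or_lt y 1) as [Hy1 | Hy1].
    { rewrite (solution_eq0 K f Hf), (solution_eq0 K0 f0 Hf0) by lra.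
      rewrite Rminus_0_r, Rabs_R0. exact HCS. }
    destruct (Rle_or_lt y 2) as [Hy2 | Hy2].
    { rewrite (solution_eq1 K f Hf), (solution_eq1 K0 f0 Hf0) by lra.
      rewrite Rminus_eq_0, Rabs_R0. exact HCS. }
    replace y with ((y - 1) + 1) by ring. set (x := y - 1).
    rewrite (solution_shift_kern K f Hf), (solution_shift_kern K0 f0 Hf0) by (unfold x; lra).
    replace (1 + RInt (fun s => kern K x s * f s) 0 x - (1 + RInt (fun s => kern K0 x s * f0 s) 0 x))
      with (RInt (fun s => kern K x s * f s) 0 x - RInt (fun s => kern K0 x s * f0 s) 0 x) by ring.
    eapply Rle_trans.
    + apply abs_RInt_sub_le with (m := B * (eta * gronwall_const B A n) + eta * A);
        [unfold x; lra | apply (ex_RInt_weighted K f Hf) | apply (ex_RInt_weighted K0 f0 Hf0) |];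
        try (apply kern_continuous || (unfold x; lra)).
      intros t Ht. destruct (Hkern x t ltac:(unfold x; lra) Ht) as [Hk Hkk0].
      apply abs_mul_sub_mul_le; auto; [apply IH | apply Hf0_bound]; unfold x in *; lra.
    + simpl. replace (eta * ((INR n + 1) * (B * gronwall_const B A n + A)))
        with ((INR n + 1) * (B * (eta * gronwall_const B A n) + eta * A)) by ring.
      apply Rmult_le_compat_r; [| unfold x; lra].
      apply Rplus_le_le_0_compat; repeat apply Rmult_le_pos; assumption.
Qed.

Lemma Derive_solution_sub_le (m : nat) : N = INR m + 1 ->
  forall x, 1 < x <= N ->
  Rabs (Derive f (x + 1) - Derive f0 (x + 1)) <= eta * ((1 + N) * (B * gronwall_const B A m + A)).
Proof.
  intros HN x Hx. set (D := gronwall_const B A m).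
  assert (HD : 0 <= D) by (apply gronwall_const_nonneg; assumption).
  assert (Hsub : forall s, 0 <= s <= N -> Rabs (f s - f0 s) <= eta * D)
    by (intros s Hs; apply (solution_sub_le m); lra).
  rewrite (Derive_solution_shift K f Hf), (Derive_solution_shift K0 f0 Hf0) by lra.
  replace (kern K x x * f x + RInt (fun s => dkern K x s * f s) 0 x
           - (kern K0 x x * f0 x + RInt (fun s => dkern K0 x s * f0 s) 0 x))
    with ((kern K x x * f x - kern K0 x x * f0 x)
          + (RInt (fun s => dkern K x s * f s) 0 x - RInt (fun s => dkern K0 x s * f0 s) 0 x))
    by ring.
  eapply Rle_trans; [apply Rabs_triang |].
  replace (eta * ((1 + N) * (B * D + A)))
    with ((B * (eta * D) + eta * A) + N * (B * (eta * D) + eta * A)) by ring.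
  assert (Hpos : 0 <= B * (eta * D) + eta * A)
    by (apply Rplus_le_le_0_compat; repeat apply Rmult_le_pos; assumption).
  apply Rplus_le_compat.
  - destruct (Hkern x x ltac:(lra) ltac:(lra)).
    apply abs_mul_sub_mul_le; auto; [apply Hsub | apply Hf0_bound]; lra.
  - eapply Rle_trans.
    + apply abs_RInt_sub_le with (m := B * (eta * D) + eta * A);
        [lra | apply (ex_RInt_weighted K f Hf) | apply (ex_RInt_weighted K0 f0 Hf0) |];
        try (apply dkern_continuous || lra).
      intros t Ht. destruct (Hdkern x t ltac:(lra) Ht).
      apply abs_mul_sub_mul_le; auto; [apply Hsub | apply Hf0_bound]; lra.
    + apply Rmult_le_compat_r; [exact Hpos | lra].
Qed.

End Comparison.

Lemma renyi_coef_derive x : 0 < x -> is_derive (fun y => 2 / y) x (- (2 / x ^ 2)).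
Proof. intros Hx. auto_derive; [lra | field; lra]. Qed.

Definition renyi_kernel : sep_kernel :=
  SepKernel (fun x => 2 / x) (fun _ => 0) (fun x => - (2 / x ^ 2)) (fun _ => 0)
    (fun _ => 1) (fun _ => 0)
    renyi_coef_derive
    (fun x _ => is_derive_const (K := R_AbsRing) (V := R_NormedModule) 0 x)
    (fun s => continuous_const 1 s) (fun s => continuous_const 0 s).

Lemma renyi_kern x s : kern renyi_kernel x s = 2 / x.
Proof. unfold kern; simpl. ring. Qed.

Lemma renyi_dkern x s : dkern renyi_kernel x s = - (2 / x ^ 2).
Proof. unfold dkern; simpl. ring. Qed.

Lemma renyi_delay_solution (M : R -> R) : is_M_renyi M -> delay_solution renyi_kernel M.
Proof.
  intros [H0 Hshift]. split; [exact H0 |].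
  intros x Hx _. rewrite Hshift by exact Hx. unfold delay_rhs; simpl.
  rewrite (RInt_ext (fun s => 1 * M s) M) by (intros; simpl; ring). ring.
Qed.

Section Renyi.
Variable M : R -> R.
Hypothesis HM : is_M_renyi M.
Let HMd : delay_solution renyi_kernel M := renyi_delay_solution M HM.

Lemma renyi_abs_le_pow3 (n : nat) y : 0 <= y <= INR n + 1 -> Rabs (M y) <= 3 ^ n.
Proof.
  revert y. induction n as [| n IH]; intros y Hy.
  - simpl in Hy. rewrite (solution_eq0 _ M HMd), Rabs_R0 by lra. simpl; lra.
  - rewrite S_INR in Hy. pose proof (pow_lt 3 n ltac:(lra)) as H3.
    destruct (Rle_or_lt y 1) as [Hy1 | Hy1].
    { rewrite (solution_eq0 _ M HMd), Rabs_R0 by lra. simpl; lra. }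
    replace y with ((y - 1) + 1) by ring. set (x := y - 1).
    rewrite (solution_shift_kern _ M HMd) by (unfold x; lra).
    assert (HI : Rabs (RInt (fun s => kern renyi_kernel x s * M s) 0 x) <= (x - 0) * (2 / x * 3 ^ n)).
    { apply abs_RInt_le_const; [unfold x; lra | |].
      - apply (ex_RInt_weighted _ M HMd); [apply kern_continuous | unfold x; lra].
      - intros t Ht. rewrite renyi_kern, Rabs_mult, Rabs_pos_eq
          by (apply Rlt_le, Rdiv_lt_0_compat; unfold x in *; lra).
        apply Rmult_le_compat_l; [apply Rlt_le, Rdiv_lt_0_compat; unfold x in *; lra |].
        apply IH. unfold x in *; lra. }
    replace ((x - 0) * (2 / x * 3 ^ n)) with (2 * 3 ^ n) in HI by (field; unfold x; lra).
    pose proof (pow_R1_Rle 3 n ltac:(lra)).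
    eapply Rle_trans; [apply Rabs_triang |]. rewrite Rabs_R1. simpl. lra.
Qed.

Lemma renyi_Psi_kern t : 1 < t -> t ^ 2 / 2 * kern renyi_kernel t t = t.
Proof. intros Ht. rewrite renyi_kern. field. lra. Qed.

Lemma renyi_Psi_dkern t s : 1 < t -> t ^ 2 / 2 * dkern renyi_kernel t s = - 1.
Proof. intros Ht. rewrite renyi_dkern. field. lra. Qed.

Lemma renyi_is_derive_Psi t : is_derive (fun u => u ^ 2 / 2) t t.
Proof. auto_derive; [exact I | field]. Qed.

Lemma renyi_is_derive_Psi1 t : is_derive (fun u => u) t 1.
Proof. auto_derive; [exact I | reflexivity]. Qed.

Lemma renyi_balance_deviation_le a x c E : 2 < a <= x ->
  (forall s, a <= s <= x -> Rabs (Derive M s - c) <= E) ->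
  Rabs (x ^ 2 / 2 * (Derive M (x + 1) - c)) <=
    Rabs (a ^ 2 / 2 * (Derive M (a + 1) - c)) + E * (x ^ 2 / 2 - a ^ 2 / 2).
Proof.
  intros Hax Hs.
  apply (balance_deviation_le renyi_kernel M (fun u => u ^ 2 / 2) (fun u => u) (fun _ => 1));
    auto using renyi_is_derive_Psi, renyi_is_derive_Psi1, continuous_const,
      renyi_Psi_kern, renyi_Psi_dkern.
  intros s Hs'. split; [lra | apply Hs, Hs'].
Qed.

Lemma renyi_Derive_deviation_persists T c E : 2 < T ->
  (forall y, T <= y <= T + 1 -> Rabs (Derive M y - c) <= E) ->
  forall y, T <= y -> Rabs (Derive M y - c) <= E.
Proof.
  intros HT Hinit.
  apply (Derive_deviation_persists renyi_kernel M (fun u => u ^ 2 / 2) (fun u => u) (fun _ => 1));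
    auto using renyi_is_derive_Psi, renyi_is_derive_Psi1, continuous_const,
      renyi_Psi_kern, renyi_Psi_dkern.
  intros t Ht. split; nra.
Qed.

Lemma renyi_Derive_abs_le y : 3 <= y -> Rabs (Derive M y) <= 18.
Proof.
  intros Hy. rewrite <- (Rminus_0_r (Derive M y)).
  apply (renyi_Derive_deviation_persists 3); [lra | | exact Hy]. clear y Hy.
  intros y Hy. rewrite Rminus_0_r.
  replace y with ((y - 1) + 1) by ring. set (x := y - 1).
  assert (Hx : 2 <= x <= 3) by (unfold x; lra). clearbody x.
  assert (HM9 : forall s, 0 <= s <= 3 -> Rabs (M s) <= 9)
    by (intros s Hs; replace 9 with (3 ^ 2) by ring; apply renyi_abs_le_pow3; simpl; lra).
  assert (Hc1 : 0 < 2 / x <= 1) by (split; [apply Rdiv_lt_0_compat | apply Rle_div_l]; lra).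
  assert (Hc2 : 0 < 2 / x ^ 2) by (apply Rdiv_lt_0_compat; [| apply pow_lt]; lra).
  assert (HI : Rabs (RInt (fun s => dkern renyi_kernel x s * M s) 0 x) <= (x - 0) * (2 / x ^ 2 * 9)).
  { apply abs_RInt_le_const; [lra | |].
    - apply (ex_RInt_weighted _ M HMd); [apply dkern_continuous | lra].
    - intros t Ht. rewrite renyi_dkern, Rabs_mult, Rabs_Ropp, Rabs_pos_eq by lra.
      apply Rmult_le_compat_l; [lra | apply HM9; lra]. }
  replace ((x - 0) * (2 / x ^ 2 * 9)) with (9 * (2 / x)) in HI by (field; lra).
  assert (HMx : Rabs (M x) <= 9) by (apply HM9; lra).
  rewrite (Derive_solution_shift _ M HMd), renyi_kern by lra.
  eapply Rle_trans; [apply Rabs_triang |].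
  rewrite Rabs_mult, (Rabs_pos_eq (2 / x)) by lra.
  nra.
Qed.


Lemma renyi_Derive_oscillation T : 4 <= T ->
  forall y, T <= y <= T + 1 -> Rabs (Derive M y - Derive M T) <= 128 / T.
Proof.
  intros HT y Hy. set (x := y - 1).
  assert (Hbal := renyi_balance_deviation_le (T - 1) x (Derive M T) 36 ltac:(unfold x; lra)).
  replace (T - 1 + 1) with T in Hbal by ring. replace (x + 1) with y in Hbal by (unfold x; ring).
  rewrite Rminus_eq_0, Rmult_0_r, Rabs_R0, Rplus_0_l, Rabs_mult,
    (Rabs_pos_eq (x ^ 2 / 2)) in Hbal by (apply Rmult_le_pos; [apply pow2_ge_0 | lra]).
  assert (Hosc : (x ^ 2 / 2) * Rabs (Derive M y - Derive M T) <= 36 * T).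
  { eapply Rle_trans; [apply Hbal | unfold x; nra].
    intros s Hs. apply Rabs_le.
    assert (Hs18 := renyi_Derive_abs_le s ltac:(lra)).
    assert (HT18 := renyi_Derive_abs_le T ltac:(lra)).
    apply Rabs_le_between in Hs18. apply Rabs_le_between in HT18. lra. }
  assert (Hx2 : 9 * T ^ 2 / 32 <= x ^ 2 / 2) by (unfold x; nra).
  apply (Rmult_le_reg_r (9 * T / 32)); [lra |].
  replace (128 / T * (9 * T / 32)) with 36 by (field; lra).
  apply (Rmult_le_reg_r T); [lra |].
  pose proof (Rabs_pos (Derive M y - Derive M T)). nra.
Qed.

Lemma renyi_Derive_tail eps : 0 < eps ->
  exists T, 4 <= T /\ forall y, T <= y -> Rabs (Derive M y - Derive M T) <= eps.
Proof.
  intros Heps. exists (Rmax 4 (128 / eps)).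
  set (T := Rmax 4 (128 / eps)).
  assert (HT4 : 4 <= T) by apply Rmax_l.
  assert (HT : 128 <= T * eps) by (apply Rle_div_l; [lra | apply Rmax_r]).
  split; [exact HT4 |].
  apply renyi_Derive_deviation_persists; [lra |].
  intros y Hy. eapply Rle_trans; [apply renyi_Derive_oscillation; assumption |].
  apply Rle_div_l; lra.
Qed.


End Renyi.

Definition exp_coef1 (lam x : R) : R := lam * exp (lam * x) / (exp (lam * x) - 1).
Definition exp_coef2 (lam x : R) : R := lam / (exp (lam * x) - 1).
Definition exp_dcoef (lam x : R) : R := - (lam ^ 2 * exp (lam * x) / (exp (lam * x) - 1) ^ 2).

Lemma exp_gt_1 v : 0 < v -> 1 < exp v.
Proof. intros Hv. rewrite <- exp_0. apply exp_increasing, Hv. Qed.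

Lemma exp_coef1_derive lam : 0 < lam ->
  forall x, 0 < x -> is_derive (exp_coef1 lam) x (exp_dcoef lam x).
Proof.
  intros Hlam x Hx. pose proof (exp_gt_1 (lam * x) ltac:(nra)).
  unfold exp_coef1, exp_dcoef. auto_derive; [lra | field; lra].
Qed.

Lemma exp_coef2_derive lam : 0 < lam ->
  forall x, 0 < x -> is_derive (exp_coef2 lam) x (exp_dcoef lam x).
Proof.
  intros Hlam x Hx. pose proof (exp_gt_1 (lam * x) ltac:(nra)).
  unfold exp_coef2, exp_dcoef. auto_derive; [lra | field; lra].
Qed.

Lemma continuous_exp_scaled (c s : R) : continuous (fun u => exp (c * u)) s.
Proof.
  apply (ex_derive_continuous (K := R_AbsRing) (V := R_NormedModule)). auto_derive. exact I.
Qed.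

(* Reflecting the [f (x - t)] half of the integral turns the equation for [M_lambda] into one
   with kernel [lam (e^(lam (x - s)) + e^(lam s)) / (e^(lam x) - 1)], a separable sum. *)
Definition exp_kernel (lam : R) (Hlam : 0 < lam) : sep_kernel :=
  SepKernel (exp_coef1 lam) (exp_coef2 lam) (exp_dcoef lam) (exp_dcoef lam)
    (fun s => exp (- lam * s)) (fun s => exp (lam * s))
    (exp_coef1_derive lam Hlam) (exp_coef2_derive lam Hlam)
    (continuous_exp_scaled (- lam)) (continuous_exp_scaled lam).

Lemma exp_delay_solution lam (Hlam : 0 < lam) (f : R -> R) :
  is_M_lambda lam f -> delay_solution (exp_kernel lam Hlam) f.
Proof.
  intros [H0 Hshift]. split; [exact H0 |].
  intros x Hx Hint. rewrite Hshift by exact Hx. unfold delay_rhs; simpl.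
  pose proof (exp_gt_1 (lam * x) ltac:(nra)) as HE.
  set (I1 := RInt (fun s => exp (- lam * s) * f s) 0 x).
  set (I2 := RInt (fun s => exp (lam * s) * f s) 0 x).
  assert (Hsum : is_RInt (fun t => plus (scal (exp_coef1 lam x) (exp (- lam * t) * f t))
                                        (scal (exp_coef2 lam x) (exp (lam * (0 + x - t)) * f (0 + x - t))))
                   0 x (plus (scal (exp_coef1 lam x) I1) (scal (exp_coef2 lam x) I2))).
  { apply (is_RInt_plus (V := R_NormedModule)); apply (is_RInt_scal (V := R_NormedModule)).
    - apply (RInt_correct (V := R_CompleteNormedModule)), Hint, continuous_exp_scaled.
    - apply (is_RInt_reflect (fun s => exp (lam * s) * f s)).
      apply (RInt_correct (V := R_CompleteNormedModule)), Hint, continuous_exp_scaled. }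
  apply (is_RInt_ext (V := R_NormedModule)
           _ (fun t => lam * exp (- (lam * t)) / (1 - exp (- (lam * x))) * (f t + f (x - t))))
    in Hsum.
  - rewrite (is_RInt_unique (V := R_CompleteNormedModule) _ _ _ _ Hsum).
    unfold plus, scal; simpl; unfold mult; simpl. ring.
  - intros t _. unfold plus, scal; simpl; unfold mult; simpl.
    replace (0 + x - t) with (x - t) by ring.
    replace (exp (- (lam * t))) with (exp (- lam * t)) by (f_equal; ring).
    replace (exp (- (lam * x))) with (/ exp (lam * x)) by (rewrite <- exp_Ropp; reflexivity).
    replace (exp (lam * (x - t))) with (exp (lam * x) * exp (- lam * t))
      by (rewrite <- exp_plus; f_equal; ring).
    unfold exp_coef1, exp_coef2. field. split; lra.
Qed.

Section ExponentialBalance.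
Variables (lam : R) (Hlam : 0 < lam) (f : R -> R).
Hypothesis Hf : is_M_lambda lam f.

Lemma exp_Psi_kern t : 1 < t ->
  (cosh (lam * t) - 1) / lam * kern (exp_kernel lam Hlam) t t = sinh (lam * t).
Proof.
  intros Ht. pose proof (exp_gt_1 (lam * t) ltac:(nra)) as HE.
  unfold kern; simpl; unfold exp_coef1, exp_coef2, cosh, sinh.
  replace (exp (- lam * t)) with (/ exp (lam * t)) by (rewrite <- exp_Ropp; f_equal; ring).
  rewrite exp_Ropp. field. repeat split; lra.
Qed.

Lemma exp_Psi_dkern t s : 1 < t ->
  (cosh (lam * t) - 1) / lam * dkern (exp_kernel lam Hlam) t s = - (lam * cosh (lam * s)).
Proof.
  intros Ht. pose proof (exp_gt_1 (lam * t) ltac:(nra)) as HE.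
  unfold dkern; simpl; unfold exp_dcoef, cosh.
  replace (exp (- lam * s)) with (exp (- (lam * s))) by (f_equal; ring).
  rewrite !exp_Ropp. field. repeat split; try lra. apply Rgt_not_eq, exp_pos.
Qed.

Lemma exp_is_derive_Psi t : is_derive (fun u => (cosh (lam * u) - 1) / lam) t (sinh (lam * t)).
Proof. unfold cosh, sinh. auto_derive; [exact I | field; lra]. Qed.

Lemma exp_is_derive_Psi1 t : is_derive (fun u => sinh (lam * u)) t (lam * cosh (lam * t)).
Proof. unfold cosh, sinh. auto_derive; [exact I | field]. Qed.

Lemma exp_continuous_Psi2 t : continuous (fun u => lam * cosh (lam * u)) t.
Proof.
  apply (ex_derive_continuous (K := R_AbsRing) (V := R_NormedModule)).
  unfold cosh. auto_derive. exact I.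
Qed.

Lemma exp_Derive_deviation_persists T c E : 2 < T ->
  (forall y, T <= y <= T + 1 -> Rabs (Derive f y - c) <= E) ->
  forall y, T <= y -> Rabs (Derive f y - c) <= E.
Proof.
  intros HT Hinit.
  apply (Derive_deviation_persists (exp_kernel lam Hlam) f (fun u => (cosh (lam * u) - 1) / lam)
           (fun u => sinh (lam * u)) (fun u => lam * cosh (lam * u)));
    auto using exp_delay_solution, exp_is_derive_Psi, exp_is_derive_Psi1, exp_continuous_Psi2,
      exp_Psi_kern, exp_Psi_dkern.
  intros t Ht. pose proof (exp_gt_1 (lam * t) ltac:(nra)) as HE.
  assert (Hinv : / exp (lam * t) < 1).
  { rewrite <- Rinv_1. apply Rinv_lt_contravar; lra. }
  pose proof (Rinv_0_lt_compat _ (exp_pos (lam * t))).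
  unfold cosh, sinh. rewrite exp_Ropp. split.
  - apply Rdiv_lt_0_compat; [| exact Hlam].
    replace ((exp (lam * t) + / exp (lam * t)) / 2 - 1)
      with ((exp (lam * t) - 1) ^ 2 / (2 * exp (lam * t))) by (field; lra).
    apply Rdiv_lt_0_compat; [apply pow_lt |]; lra.
  - lra.
Qed.

End ExponentialBalance.

Lemma exp_le_compat x y : x <= y -> exp x <= exp y.
Proof.
  intros Hxy. destruct (Rle_lt_or_eq_dec x y Hxy) as [Hlt | ->]; [| lra].
  left. apply exp_increasing, Hlt.
Qed.

Lemma exp_sub1_ratio_bounds v : 0 < v -> / exp v <= v / (exp v - 1) <= 1.
Proof.
  intros Hv. pose proof (exp_gt_1 v Hv) as HE.
  pose proof (exp_ineq1_le v) as Hup.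
  pose proof (exp_ineq1_le (- v)) as Hlow. rewrite exp_Ropp in Hlow.
  split; [apply Rle_div_r | apply Rle_div_l]; try lra.
  replace (/ exp v * (exp v - 1)) with (1 - / exp v) by (field; lra). lra.
Qed.


Lemma abs_sub_le_of_ratio_bounds (q c b : R) : 0 < c <= 2 -> 1 <= b -> c / b <= q <= c * b ->
  Rabs q <= 2 * b /\ Rabs (q - c) <= 2 * (b - 1).
Proof.
  intros Hc Hb [Hlo Hhi].
  assert (Hcb : c - c / b <= c * (b - 1)).
  { replace (c - c / b) with (c * (b - 1) / b) by (field; lra).
    apply (Rmult_le_reg_r b); [lra |].
    replace (c * (b - 1) / b * b) with (c * (b - 1)) by (field; lra).
    assert (0 <= c * (b - 1)) by (apply Rmult_le_pos; lra). nra. }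
  assert (0 < c / b) by (apply Rdiv_lt_0_compat; lra).
  split.
  - rewrite Rabs_pos_eq; nra.
  - apply Rabs_le. nra.
Qed.

Section ExponentialKernel.
Variables (lam : R) (Hlam : 0 < lam) (x s : R).
Hypothesis Hx : 0 < x.
Hypothesis Hs : 0 <= s <= x.

Let E := exp (lam * x).
Let A := lam * x / (E - 1).

Lemma exp_kernel_factor_bounds : 1 < E /\ / E <= A <= 1 /\
  1 <= exp (lam * s) <= E /\ / E <= exp (- lam * s) <= 1.
Proof.
  assert (HE : 1 < E) by (apply exp_gt_1; nra).
  assert (Hes : 1 <= exp (lam * s) <= E).
  { split; [rewrite <- exp_0 |]; apply exp_le_compat; nra. }
  replace (exp (- lam * s)) with (/ exp (lam * s)) by (rewrite <- exp_Ropp; f_equal; ring).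
  split; [exact HE | split; [apply exp_sub1_ratio_bounds; nra | split; [exact Hes |]]].
  split; [apply Rinv_le_contravar |]; [lra | lra |].
  rewrite <- Rinv_1. apply Rinv_le_contravar; lra.
Qed.

Lemma exp_kern_between : 2 / x / E <= kern (exp_kernel lam Hlam) x s <= 2 / x * E.
Proof.
  destruct exp_kernel_factor_bounds as [HE [[HA1 HA2] [[Hb1 Hb2] [He1 He2]]]].
  assert (Hprod : 1 <= E * exp (- lam * s) <= E).
  { split; [| nra]. apply (Rmult_le_compat_l E) in He1; [| lra]. rewrite Rinv_r in He1; lra. }
  assert (Hk : kern (exp_kernel lam Hlam) x s = A * (E * exp (- lam * s) + exp (lam * s)) * / x).
  { unfold kern, A; simpl; unfold exp_coef1, exp_coef2. fold E. field. split; lra. }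
  rewrite Hk. unfold Rdiv.
  assert (0 < / x) by (apply Rinv_0_lt_compat, Hx).
  assert (0 < / E) by (apply Rinv_0_lt_compat; lra).
  split; [replace (2 * / x * / E) with ((2 * / E) * / x) by ring
         | replace (2 * / x * E) with ((2 * E) * / x) by ring];
    apply Rmult_le_compat_r; nra.
Qed.

Lemma exp_dkern_between :
  2 / x ^ 2 / E ^ 2 <= - dkern (exp_kernel lam Hlam) x s <= 2 / x ^ 2 * E ^ 2.
Proof.
  destruct exp_kernel_factor_bounds as [HE [[HA1 HA2] [[Hb1 Hb2] [He1 He2]]]].
  set (b := exp (lam * s)) in *.
  assert (Hinv : exp (- lam * s) = / b) by (unfold b; rewrite <- exp_Ropp; f_equal; ring).
  rewrite Hinv in *.
  assert (Hsum : 2 <= / b + b).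
  { apply (Rmult_le_reg_r b); [lra |].
    replace ((/ b + b) * b) with (1 + b * b) by (field; lra). nra. }
  assert (Hdk : - dkern (exp_kernel lam Hlam) x s = A ^ 2 * E * (/ b + b) * / x ^ 2).
  { unfold dkern, A; simpl; unfold exp_dcoef. fold E b. rewrite Hinv. field.
    repeat split; lra. }
  assert (HA2sq : / E ^ 2 <= A ^ 2 <= 1).
  { rewrite <- pow_inv. split; [apply pow_incr | rewrite <- (pow1 2); apply pow_incr];
      pose proof (Rinv_0_lt_compat E ltac:(lra)); lra. }
  assert (Hx2 : 0 < / x ^ 2) by (apply Rinv_0_lt_compat, pow_lt, Hx).
  assert (HE2 : 0 < / E ^ 2) by (apply Rinv_0_lt_compat, pow_lt; lra).
  rewrite Hdk. unfold Rdiv. split.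
  - replace (2 * / x ^ 2 * / E ^ 2) with ((/ E ^ 2 * 1 * 2) * / x ^ 2) by ring.
    apply Rmult_le_compat_r; [lra |].
    apply Rmult_le_compat; [nra | lra | apply Rmult_le_compat; lra | lra].
  - replace (2 * / x ^ 2 * E ^ 2) with ((1 * E * (2 * E)) * / x ^ 2) by ring.
    apply Rmult_le_compat_r; [lra |].
    assert (0 <= A ^ 2) by apply pow2_ge_0.
    apply Rmult_le_compat; [nra | lra | apply Rmult_le_compat; lra | lra].
Qed.

End ExponentialKernel.

Lemma exp_sq_bounds lam N x : 0 < lam <= 1 -> 1 <= x <= N ->
  1 <= exp (lam * x) ^ 2 <= exp (2 * lam * N) /\ exp (2 * lam * N) <= exp (2 * N).
Proof.
  intros Hlam Hx.
  replace (exp (lam * x) ^ 2) with (exp (2 * lam * x))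
    by (replace (2 * lam * x) with (lam * x + lam * x) by ring; rewrite exp_plus; ring).
  split; [split; [rewrite <- exp_0 |] |]; apply exp_le_compat; nra.
Qed.

Lemma exp_kern_estimates lam (Hlam : 0 < lam) N x s : lam <= 1 -> 1 <= x <= N -> 0 <= s <= x ->
  Rabs (kern (exp_kernel lam Hlam) x s) <= 2 * exp (2 * N) /\
  Rabs (kern (exp_kernel lam Hlam) x s - kern renyi_kernel x s) <= 2 * (exp (2 * lam * N) - 1).
Proof.
  intros Hlam1 Hx Hs.
  destruct (exp_sq_bounds lam N x ltac:(lra) Hx) as [[Hb1 HbN] HNmax].
  destruct (exp_kern_between lam Hlam x s ltac:(lra) Hs) as [Hlo Hhi].
  assert (HE : 1 < exp (lam * x)) by (apply exp_gt_1; nra).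
  assert (Hc : 0 < 2 / x <= 2) by (split; [apply Rdiv_lt_0_compat | apply Rle_div_l]; lra).
  destruct (abs_sub_le_of_ratio_bounds (kern (exp_kernel lam Hlam) x s) (2 / x) (exp (lam * x) ^ 2))
    as [Habs Hsub]; [exact Hc | exact Hb1 | split |].
  - eapply Rle_trans; [| exact Hlo]. unfold Rdiv. apply Rmult_le_compat_l; [lra |].
    apply Rinv_le_contravar; nra.
  - eapply Rle_trans; [exact Hhi |]. apply Rmult_le_compat_l; nra.
  - rewrite renyi_kern. split; lra.
Qed.

Lemma exp_dkern_estimates lam (Hlam : 0 < lam) N x s : lam <= 1 -> 1 <= x <= N -> 0 <= s <= x ->
  Rabs (dkern (exp_kernel lam Hlam) x s) <= 2 * exp (2 * N) /\
  Rabs (dkern (exp_kernel lam Hlam) x s - dkern renyi_kernel x s) <= 2 * (exp (2 * lam * N) - 1).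
Proof.
  intros Hlam1 Hx Hs.
  destruct (exp_sq_bounds lam N x ltac:(lra) Hx) as [[Hb1 HbN] HNmax].
  assert (Hx2 : 1 <= x ^ 2) by nra.
  assert (Hc : 0 < 2 / x ^ 2 <= 2) by (split; [apply Rdiv_lt_0_compat | apply Rle_div_l]; lra).
  destruct (abs_sub_le_of_ratio_bounds (- dkern (exp_kernel lam Hlam) x s) (2 / x ^ 2) (exp (lam * x) ^ 2))
    as [Habs Hsub]; [exact Hc | exact Hb1 | apply exp_dkern_between; lra |].
  rewrite Rabs_Ropp in Habs. split; [lra |].
  rewrite renyi_dkern, <- Rabs_Ropp.
  replace (- (dkern (exp_kernel lam Hlam) x s - - (2 / x ^ 2)))
    with (- dkern (exp_kernel lam Hlam) x s - 2 / x ^ 2) by ring.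
  lra.
Qed.

Lemma exp_renyi_Derive_sub_le_horizon (m : nat) : exists C, 0 <= C /\
  forall lam (Hlam : 0 < lam) f M, lam <= 1 -> is_M_lambda lam f -> is_M_renyi M ->
  forall x, 2 < x <= INR m + 2 ->
  Rabs (Derive f x - Derive M x) <= (exp (2 * lam * (INR m + 1)) - 1) * C.
Proof.
  set (N := INR m + 1). set (B := 2 * exp (2 * N)). set (A := 3 ^ m).
  assert (HB : 0 <= B) by (unfold B; pose proof (exp_pos (2 * N)); lra).
  assert (HA : 0 <= A) by (unfold A; apply pow_le; lra).
  assert (HN : 1 <= N) by (unfold N; pose proof (pos_INR m); lra).
  set (C := (1 + N) * (B * gronwall_const B A m + A)).
  assert (HC : 0 <= C).
  { unfold C. pose proof (gronwall_const_nonneg B A m HB HA).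
    apply Rmult_le_pos; [lra |]. apply Rplus_le_le_0_compat; [apply Rmult_le_pos |]; assumption. }
  exists (2 * C). split; [lra |].
  intros lam Hlam f M Hlam1 Hf HM x Hx.
  assert (Heta : 0 <= 2 * (exp (2 * lam * N) - 1)).
  { assert (1 <= exp (2 * lam * N)) by (rewrite <- exp_0; apply exp_le_compat; nra). lra. }
  replace x with ((x - 1) + 1) by ring.
  replace ((exp (2 * lam * N) - 1) * (2 * C))
    with (2 * (exp (2 * lam * N) - 1) * ((1 + N) * (B * gronwall_const B A m + A))) by (unfold C; ring).
  apply (Derive_solution_sub_le (exp_kernel lam Hlam) renyi_kernel f M N B
           (2 * (exp (2 * lam * N) - 1)) A
           (exp_delay_solution lam Hlam f Hf) (renyi_delay_solution M HM));
    [| | | exact HB | exact Heta | exact HA | reflexivity | unfold N; lra].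
  - intros y s Hy Hs. apply exp_kern_estimates; assumption.
  - intros y s Hy Hs. apply exp_dkern_estimates; assumption.
  - intros s Hs. apply renyi_abs_le_pow3; [exact HM | unfold N in Hs; lra].
Qed.

Lemma exp_near_one (e : R) : 0 < e -> exists d, 0 < d /\ forall u, u < d -> exp u - 1 < e.
Proof.
  intros He. exists (ln (1 + e)). split.
  - rewrite <- ln_1. apply ln_increasing; lra.
  - intros u Hu. apply exp_increasing in Hu. rewrite exp_ln in Hu by lra. lra.
Qed.

Lemma exp_renyi_Derive_close_on_horizon (m : nat) (eps : R) : 0 < eps ->
  exists delta, 0 < delta /\
  forall lam f M, 0 < lam < delta -> is_M_lambda lam f -> is_M_renyi M ->
  forall x, 2 < x <= INR m + 2 -> Rabs (Derive f x - Derive M x) <= eps.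
Proof.
  intros Heps. destruct (exp_renyi_Derive_sub_le_horizon m) as [C [HC Hclose]].
  destruct (exp_near_one (eps / (C + 1))) as [d [Hd Hexp]];
    [apply Rdiv_lt_0_compat; lra |].
  set (N := INR m + 1) in Hclose |- *.
  assert (HN : 1 <= N) by (unfold N; pose proof (pos_INR m); lra).
  exists (Rmin 1 (d / (2 * N))). split.
  { apply Rmin_glb_lt; [lra | apply Rdiv_lt_0_compat; lra]. }
  intros lam f M [Hlam0 Hlam] Hf HM x Hx.
  assert (Hlam1 : lam <= 1) by (pose proof (Rmin_l 1 (d / (2 * N))); lra).
  assert (Hsmall : exp (2 * lam * N) - 1 <= eps / (C + 1)).
  { left. apply Hexp. replace (2 * lam * N) with (lam * (2 * N)) by ring.
    apply Rlt_div_r; [lra |]. pose proof (Rmin_r 1 (d / (2 * N))). lra. }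
  eapply Rle_trans; [apply (Hclose lam Hlam0); assumption |].
  apply Rle_trans with (eps / (C + 1) * (C + 1)); [| right; field; lra].
  apply Rmult_le_compat; [| lra | exact Hsmall | lra].
  assert (1 <= exp (2 * lam * N)) by (rewrite <- exp_0; apply exp_le_compat; nra). lra.
Qed.

Lemma exp_renyi_Derive_eq_below_2 lam f M x : 0 < lam ->
  is_M_lambda lam f -> is_M_renyi M -> 0 < x < 2 -> x <> 1 -> Derive f x = Derive M x.
Proof.
  intros Hlam Hf HM Hx Hx1.
  assert (Hflat : 0 < x < 1 \/ 1 < x < 2) by (destruct (Rlt_or_le x 1); [left | right]; lra).
  rewrite (Derive_solution_flat _ _ (exp_delay_solution lam Hlam f Hf) x Hflat).
  rewrite (Derive_solution_flat _ _ (renyi_delay_solution M HM) x Hflat).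
  reflexivity.
Qed.

Lemma exp_renyi_Derive_close_beyond lam f M T e : 0 < lam -> 2 < T ->
  is_M_lambda lam f ->
  (forall y, T <= y <= T + 1 -> Rabs (Derive f y - Derive M y) <= e) ->
  (forall y, T <= y -> Rabs (Derive M y - Derive M T) <= e) ->
  forall y, T <= y -> Rabs (Derive f y - Derive M y) <= 3 * e.
Proof.
  intros Hlam HT Hf Hwindow Htail.
  assert (Hfar : forall y, T <= y -> Rabs (Derive f y - Derive M T) <= 2 * e).
  { apply (exp_Derive_deviation_persists lam Hlam f Hf T); [exact HT |].
    intros y Hy. specialize (Hwindow y Hy). specialize (Htail y ltac:(lra)).
    apply Rabs_le_between in Hwindow. apply Rabs_le_between in Htail. apply Rabs_le. lra. }
  intros y Hy. specialize (Hfar y Hy). specialize (Htail y Hy).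
  apply Rabs_le_between in Hfar. apply Rabs_le_between in Htail. apply Rabs_le. lra.
Qed.

Theorem theorem2 (Ml : R -> R -> R) (M : R -> R)
  (HMl : forall lam, 0 < lam -> is_M_lambda lam (Ml lam))
  (HM : is_M_renyi M) :
  forall eps, 0 < eps ->
    exists delta, 0 < delta /\
      forall lam x, 0 < lam < delta -> 0 < x -> x <> 1 -> x <> 2 ->
        Rabs (Derive (Ml lam) x - Derive M x) < eps.
Proof.
  intros eps Heps.
  destruct (renyi_Derive_tail M HM (eps / 4)) as [T [HT Htail]]; [lra |].
  destruct (INR_unbounded T) as [m Hm].
  destruct (exp_renyi_Derive_close_on_horizon m (eps / 4)) as [delta [Hdelta Hnear]]; [lra |].
  exists delta. split; [exact Hdelta |].
  intros lam x Hlam Hx0 Hx1 Hx2.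
  assert (Hf := HMl lam (proj1 Hlam)).
  destruct (Rlt_or_le x 2) as [Hlt2 | Hge2].
  - rewrite (exp_renyi_Derive_eq_below_2 lam (Ml lam) M x), Rminus_eq_0, Rabs_R0;
      auto; lra.
  - apply Rle_lt_trans with (3 * (eps / 4)); [| lra].
    destruct (Rle_or_lt x T) as [HxT | HxT].
    + eapply Rle_trans; [apply (Hnear lam (Ml lam) M); auto; lra | lra].
    + apply (exp_renyi_Derive_close_beyond lam (Ml lam) M T); auto; try lra.
      intros y Hy. apply (Hnear lam (Ml lam) M); auto. lra.
Qed.
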